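(* $m_2^{(2)}(5,3)=8$.
   Context: For a prime power $q$ and $N\ge1$, a multiset of points in $\mathrm{PG}(N,q)$ is a map $\mathcal{K}$ from the points to $\mathbb{Z}_{\ge0}$, with $\mathcal{K}(S)=\sum_{P\in S}\mathcal{K}(P)$; its cardinality is $\mathcal{K}(\mathrm{PG}(N,q))$. Dimensions are projective (planes have dimension 2). For $0\le r\le N-1$ and a positive integer $w$, $m_q^{(r)}(N,w)$ is the maximum cardinality of a multiset of points in $\mathrm{PG}(N,q)$ such that every $r$-dimensional subspace has multiplicity at most $w$. *)

From mathcomp Require Import all_boot all_order all_algebra.
Set Implicit Arguments. Unset Strict Implicit. Unset Printing Implicit Defensive.
Import GRing.Theory.

(* PG(N, F) for a finite field F: subspaces of (projective) dimension r are
   represented by the set of vectors of the corresponding (r+1)-dimensional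
   vector subspace of F^(N+1) (row vectors). *)

Definition proj_subspace (F : finFieldType) (N r : nat)
    (S : {set 'rV[F]_N.+1}) : bool :=
  [exists A : 'M[F]_(r.+1, N.+1),
     (\rank A == r.+1) && (S == [set v | (v <= A)%MS])].

Definition proj_point (F : finFieldType) (N : nat) (P : {set 'rV[F]_N.+1}) : bool :=
  @proj_subspace F N 0 P.

(* A multiset of points: a function assigning a multiplicity to each point
   (its values on non-points are irrelevant). *)
Definition multiset (F : finFieldType) (N : nat) := {set 'rV[F]_N.+1} -> nat.

Definition mult (F : finFieldType) (N : nat) (K : multiset F N)
    (S : {set 'rV[F]_N.+1}) : nat :=
  \sum_(P : {set 'rV[F]_N.+1} | proj_point P && (P \subset S)) K P.

Definition mcard (F : finFieldType) (N : nat) (K : multiset F N) : nat :=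
  mult K setT.

Definition admissible (F : finFieldType) (N r w : nat) (K : multiset F N) : Prop :=
  forall S, @proj_subspace F N r S -> mult K S <= w.

(* m is m_q^{(r)}(N, w) : the maximum cardinality of an admissible multiset *)
Definition is_m (F : finFieldType) (N r w m : nat) : Prop :=
  (exists K : multiset F N, admissible r w K /\ mcard K = m) /\
  (forall K : multiset F N, admissible r w K -> mcard K <= m).

(* Identify a multiset of points of PG(5,2) with the rows of a matrix W over
   F_2 with six columns, each point repeated according to its multiplicity.
   A plane contains four rows of W (with distinct indices) iff W has a
   nonzero left dependency c (c W = 0) of weight at most 4.

   Upper bound: with nine rows, the left kernel of W is a binary linear code
   of length 9 with at least 2^(9-6) = 8 words; if every plane has
   multiplicity at most 3, all its nonzero words have weight at least 5.
   Each coordinate is nonzero on at most half of the code, so the weights sum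
   to at most 9|C|/2.  Two distinct words of weight 5 add up to a word of even
   weight, hence of weight at least 6, so there is at most one more word of
   weight 5 than of weight > 5; the three counts are incompatible.

   Lower bound: the six unit vectors together with 111100 and 001111 have no
   nonzero dependency of weight below 5, so no plane contains four of them. *)

From mathcomp Require Import all_boot all_order all_algebra zify.
Set Implicit Arguments. Unset Strict Implicit. Unset Printing Implicit Defensive.
Import GRing.Theory.
Local Open Scope ring_scope.

Lemma F2_cases (x : 'F_2) : x = 0 \/ x = 1.
Proof. by case: x => [[|[|m]] //= lt_m2]; [left | right]; apply: val_inj. Qed.

Lemma oppmx_F2 m n (A : 'M['F_2]_(m, n)) : - A = A.
Proof. by apply/matrixP => i j; rewrite !mxE (oppr_pchar2 (pchar_Fp _)). Qed.

Section Weight.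
Variables (R : nzRingType) (n : nat).

Definition supp (c : 'rV[R]_n) : {set 'I_n} := [set i | c ord0 i != 0].
Definition wt (c : 'rV[R]_n) : nat := #|supp c|.

Lemma wtE c : wt c = (\sum_(i < n) (c ord0 i != 0%R))%N.
Proof. by rewrite /wt /supp -sum1dep_card big_mkcond. Qed.

Lemma coord_out_supp c (T : {set 'I_n}) j :
  supp c \subset T -> j \notin T -> c ord0 j = 0.
Proof.
move=> /subsetP sub_cT jNT; apply/eqP; apply: contraNT jNT => cj.
by apply: sub_cT; rewrite inE.
Qed.

End Weight.

Lemma wt_row_mx (R : nzRingType) n1 n2 (u : 'rV[R]_n1) (v : 'rV[R]_n2) :
  wt (row_mx u v) = (wt u + wt v)%N.
Proof.
by rewrite !wtE big_split_ord; congr addn; apply: eq_bigr => i _;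
  rewrite ?row_mxEl ?row_mxEr.
Qed.

Lemma sum_indicator_card (X : finType) (A : {pred X}) (P : pred X) :
  (\sum_(x in A) P x = #|[set x in A | P x]|)%N.
Proof. by rewrite -sum1dep_card big_mkcondr; apply: eq_bigr => x _; case: (P x). Qed.

Section SupportedDependencies.
Variables (F : fieldType) (m n : nat) (W : 'M[F]_(m, n)) (T : {set 'I_m}).

Let idx : 'I_#|T| -> 'I_m := enum_val.
Let sel : 'M[F]_(#|T|, m) := rowsub idx 1%:M.

Let sel_coord (x : 'rV_#|T|) j : (x *m sel) ord0 j = \sum_i x ord0 i * (idx i == j)%:R.
Proof. by rewrite !mxE; apply: eq_bigr => i _; rewrite !mxE. Qed.

Let sel_coord_idx (x : 'rV_#|T|) i : (x *m sel) ord0 (idx i) = x ord0 i.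
Proof.
rewrite sel_coord (bigD1 i) //= eqxx mulr1 big1 ?addr0 // => k ne_ki.
by rewrite (inj_eq enum_val_inj) (negbTE ne_ki) mulr0.
Qed.

Let supp_sel (x : 'rV_#|T|) : supp (x *m sel) \subset T.
Proof.
apply/subsetP => j; rewrite inE; apply: contraNT => jNT.
rewrite sel_coord big1 // => i _; case: eqP => [idx_j | _]; last by rewrite mulr0.
by move: jNT; rewrite -idx_j enum_valP.
Qed.

Lemma supported_depP :
  reflect (exists c, [/\ c != 0, c *m W = 0 & supp c \subset T])
          (~~ row_free (rowsub idx W)).
Proof.
apply: (iffP idP) => [| [c [nz_c cW0 suppT]]].
  rewrite -kermx_eq0 => /rowV0Pn [x /sub_kermxP xW0 nz_x].
  exists (x *m sel); split; last exact: supp_sel.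
  - apply: contra nz_x => /eqP x0; apply/eqP/rowP => i.
    by rewrite -sel_coord_idx x0 !mxE.
  - by rewrite -mulmxA -rowsubE.
pose x := \row_i c ord0 (idx i).
have c_eq : c = x *m sel.
  apply/rowP => j; case: (boolP (j \in T)) => [jT | jNT].
    by rewrite -(enum_rankK_in jT jT) sel_coord_idx mxE.
  by rewrite !(coord_out_supp _ jNT) ?supp_sel.
apply/negP => /row_free_inj /(_ x 0) x0.
move: nz_c; rewrite c_eq x0 ?mul0mx ?eqxx //.
by rewrite rowsubE mulmxA -c_eq cW0.
Qed.

End SupportedDependencies.

Lemma exists_card_between (X : finType) (A B : {set X}) k :
  A \subset B -> (#|A| <= k <= #|B|)%N ->
  exists C : {set X}, [/\ A \subset C, C \subset B & #|C| = k].
Proof.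
move=> sAB /andP [leAk lekB].
have [s [uniq_s size_s sub_s]] : exists s, [/\ uniq s, size s = (k - #|A|)%N
    & {subset s <= B :\: A}].
  by apply/card_geqP; rewrite cardsD (setIidPr sAB); lia.
have disj_s : [disjoint A & [set x in s]].
  by apply/pred0P => x /=; rewrite inE; apply/negP => /andP [xA /sub_s]; rewrite inE xA.
exists (A :|: [set x in s]); split; first exact: subsetUl.
  by rewrite subUset sAB; apply/subsetP => x; rewrite inE => /sub_s /setDP [].
rewrite cardsU (disjoint_setI0 disj_s) cards0 subn0 cardsE (card_uniqP uniq_s).
by rewrite size_s; lia.
Qed.

Lemma exists_full_rank_supmx (F : fieldType) p n k (U : 'M[F]_(p, n)) :
  (\rank U <= k <= n)%N -> exists A : 'M_(k, n), \rank A = k /\ (U <= A)%MS.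
Proof.
move=> /andP [leUk lekn]; exists (pid_mx k *m row_ebase U); split.
  by rewrite mxrankMfree ?row_free_unit ?row_ebase_unit // rank_pid_mx.
rewrite -{1}(mulmx_ebase U).
have -> : pid_mx (\rank U) = (pid_mx (\rank U) : 'M[F]_(p, k)) *m (pid_mx k : 'M_(k, n)).
  by rewrite mul_pid_mx; congr pid_mx; lia.
by rewrite !mulmxA -(mulmxA (col_ebase U *m _)) submxMl.
Qed.

Section RowsInSubspaces.
Variables (F : fieldType) (m n : nat) (W : 'M[F]_(m, n)).

Lemma exists_supmx_of_dep k (c : 'rV[F]_m) : c != 0 -> c *m W = 0 ->
  (wt c <= k.+1)%N -> (k.+1 <= m)%N -> (k <= n)%N ->
  exists A : 'M_(k, n), \rank A = k /\ (k < #|[set j | (row j W <= A)%MS]|)%N.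
Proof.
move=> nz_c cW0 le_wt le_km le_kn.
have [T [suppT _ cardT]] : exists T : {set 'I_m},
    [/\ supp c \subset T, T \subset setT & #|T| = k.+1].
  by apply: exists_card_between; rewrite ?subsetT // le_wt cardsT card_ord.
pose WT : 'M_(#|T|, n) := rowsub enum_val W.
have rank_WT : (\rank WT <= k)%N.
  have : ~~ row_free WT by apply/supported_depP; exists c.
  by rewrite /row_free -ltnS -cardT ltn_neqAle rank_leq_row andbT.
have [A [rankA subA]] : exists A : 'M_(k, n), \rank A = k /\ (WT <= A)%MS.
  by apply: exists_full_rank_supmx; rewrite rank_WT.
exists A; split=> //; rewrite -cardT; apply: subset_leq_card; apply/subsetP => j jT.
by rewrite inE -(enum_rankK_in jT jT) -row_rowsub (submx_trans (row_sub _ _) subA).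
Qed.

Lemma dep_of_supmx k (A : 'M_(k, n)) : (k < #|[set j | (row j W <= A)%MS]|)%N ->
  exists c, [/\ c != 0, c *m W = 0 & (wt c <= k.+1)%N].
Proof.
move=> lt_k.
have [T [_ subT cardT]] : exists T : {set 'I_m}, [/\ set0 \subset T,
    T \subset [set j | (row j W <= A)%MS] & #|T| = k.+1].
  by apply: (exists_card_between (sub0set _)); rewrite cards0.
pose WT : 'M_(#|T|, n) := rowsub enum_val W.
have rank_WT : (\rank WT <= k)%N.
  apply: leq_trans (rank_leq_row A); apply: mxrankS; apply/row_subP => i.
  by rewrite row_rowsub; have := subsetP subT _ (enum_valP i); rewrite inE.
have : ~~ row_free WT by rewrite /row_free neq_ltn (leq_ltn_trans rank_WT) // cardT.
case/supported_depP => c [nz_c cW0 suppT].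
by exists c; split; rewrite // -cardT subset_leq_card.
Qed.

End RowsInSubspaces.

Lemma nz_rows_of_dep_wt (F : fieldType) m n (W : 'M[F]_(m, n)) :
  (forall c, c != 0 -> c *m W = 0 -> (1 < wt c)%N) -> forall i, row i W != 0.
Proof.
move=> dep_wt i; apply/negP => /eqP Wi0.
have nz_e : delta_mx 0 i != 0 :> 'rV[F]_m.
  by apply/negP => /eqP/rowP/(_ i)/eqP; rewrite !mxE !eqxx oner_eq0.
have := dep_wt _ nz_e; rewrite -rowE Wi0 /wt => /(_ erefl).
rewrite (_ : supp _ = [set i]) ?cards1 //.
by apply/setP => j; rewrite !inE mxE eqxx /=; case: (j == i); rewrite ?oner_eq0 ?eqxx.
Qed.

Lemma card_kernel_mul (R : finNzRingType) m n (M : 'M[R]_(m, n)) :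
  (#|R| ^ m <= #|[set c : 'rV_m | c *m M == 0%R]| * #|R| ^ n)%N.
Proof.
have card_rV k : #|{: 'rV[R]_k}| = (#|R| ^ k)%N by rewrite card_mx mul1n.
pose fiber y := [set c : 'rV_m | c *m M == y].
have le_fiber y : (#|fiber y| <= #|[set c : 'rV_m | c *m M == 0%R]|)%N.
  have [-> | [c0 c0y]] := set_0Vmem (fiber y); first by rewrite cards0.
  rewrite -(card_imset _ (addIr (- c0))); apply: subset_leq_card.
  apply/subsetP => _ /imsetP [c cy ->]; move: cy c0y; rewrite !inE mulmxDl mulNmx.
  by move=> /eqP -> /eqP ->; rewrite subrr.
have -> : (#|R| ^ m = \sum_(y : 'rV_n) #|fiber y|)%N.
  rewrite -card_rV -sum1_card (partition_big (fun c => c *m M) xpredT) //=.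
  by apply: eq_bigr => y _; rewrite -sum1_card; apply: eq_bigl => c; rewrite inE.
rewrite mulnC -card_rV -sum_nat_const.
by apply: leq_sum => y _; apply: le_fiber.
Qed.

Lemma wt_add_F2 n (a b : 'rV['F_2]_n) :
  (wt a + wt b + wt (a + b) = 2 * #|supp a :|: supp b|)%N.
Proof.
rewrite /wt -!sum1_card ![\sum_(i in _) 1]big_mkcond -!big_split big_distrr /=.
apply: eq_bigr => i _; rewrite !inE mxE.
have F2_11 : 1 + 1 = 0 :> 'F_2 by apply: (addrr_pchar2 (pchar_Fp _)).
by case: (F2_cases (a ord0 i)) => ->; case: (F2_cases (b ord0 i)) => ->;
  rewrite ?addr0 ?add0r ?F2_11 ?eqxx ?oner_eq0.
Qed.

Section BinaryLinearCode.
Variables (m : nat) (C : {set 'rV['F_2]_m}).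
Hypothesis addC : {in C &, forall a b, a + b \in C}.

Lemma coord_nonzero_half i : (2 * #|[set c in C | c ord0 i != 0%R]| <= #|C|)%N.
Proof.
have [b /andP [bC bi] | noneC] := pickP [pred b in C | b ord0 i != 0]; last first.
  rewrite (_ : [set c in C | _] = set0) ?cards0 //.
  by apply/setP => c; rewrite !inE; have /= -> := noneC c.
have := cardsID [set c : 'rV['F_2]_m | c ord0 i != 0] C; rewrite -setIdE.
suff -> : #|[set c in C | c ord0 i != 0%R]| = #|C :\: [set c : 'rV_m | c ord0 i != 0%R]|.
  by move=> <-; rewrite mul2n -addnn.
have F2_nz x : x != 0 -> x = 1 :> 'F_2 by case: (F2_cases x) => ->; rewrite ?eqxx.
rewrite -(card_imset _ (addIr b)); apply: eq_card => c; rewrite !inE.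
apply/imsetP/idP => [[d /setIdP [dC di] ->] | /andP [ci cC]].
  by rewrite addC // mxE (F2_nz _ di) (F2_nz _ bi).
exists (c + b); last by rewrite -addrA -{2}(oppmx_F2 b) subrr addr0.
rewrite inE addC //= mxE (F2_nz _ bi); move: ci; rewrite negbK => /eqP ->.
by rewrite add0r oner_eq0.
Qed.

Lemma sum_wt_code_le : (2 * \sum_(c in C) wt c <= m * #|C|)%N.
Proof.
have -> : (\sum_(c in C) wt c = \sum_(i < m) #|[set c in C | c ord0 i != 0%R]|)%N.
  under eq_bigr => c _ do rewrite wtE.
  by rewrite exchange_big; apply: eq_bigr => i _; rewrite sum_indicator_card.
rewrite big_distrr /= -[X in (_ <= X * _)%N]card_ord -sum_nat_const.
by apply: leq_sum => i _; apply: coord_nonzero_half.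
Qed.

End BinaryLinearCode.

Lemma low_weight_codeword_len9 (C : {set 'rV['F_2]_9}) :
  0 \in C -> {in C &, forall a b, a + b \in C} -> (8 <= #|C|)%N ->
  exists2 c, c \in C & (c != 0) && (wt c <= 4)%N.
Proof.
move=> C0 addC C8.
have [c /andP [cC low_c] | noneC] := pickP [pred c in C | (c != 0) && (wt c <= 4)%N].
  by exists c.
have wt_gt4 c : c \in C -> c != 0 -> (4 < wt c)%N.
  by move=> cC nz_c; have /= := noneC c; rewrite cC nz_c ltnNge => /negbT.
exfalso.
pose C5 := [set c in C | wt c == 5%N]; pose Y := [set c in C | (5 < wt c)%N].
have card_C : (#|C| <= 1 + #|C5| + #|Y|)%N.
  have sub_C : C \subset 0 |: (C5 :|: Y).
    apply/subsetP => c cC; rewrite !inE cC /=.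
    have [-> // | nz_c] := eqVneq c 0.
    by move: (wt_gt4 c cC nz_c); rewrite [(4 < _)%N]leq_eqVlt eq_sym.
  apply: leq_trans (subset_leq_card sub_C) _; rewrite cardsU1 -addnA.
  by apply: leq_add; [apply: leq_b1 | apply: leq_card_setU].
have card_C5 : (#|C5| <= 1 + #|Y|)%N.
  have [-> | [a aC5]] := set_0Vmem C5; first by rewrite cards0.
  rewrite (cardsD1 a) aC5 leq_add2l -(card_imset _ (addrI a)).
  apply: subset_leq_card; apply/subsetP => _ /imsetP [b /setD1P [ba bC5] ->].
  move: aC5 bC5; rewrite !inE => /andP [aC /eqP wt_a] /andP [bC /eqP wt_b].
  have nz_ab : a + b != 0.
    by apply: contra ba; rewrite addr_eq0 oppmx_F2 eq_sym.
  have gt4 : (4 < wt (a + b))%N by apply: wt_gt4; rewrite ?addC.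
  (* the two occurrences of [wt (a + b)] carry different, convertible ring
     instances: [set] identifies them before [lia] *)
  have := wt_add_F2 a b; move: gt4; rewrite addC //= wt_a wt_b.
  by set w := wt (a + b); lia.
have sum_ge : (5 * #|C5| + 6 * #|Y| <= \sum_(c in C) wt c)%N.
  rewrite -!sum_indicator_card !big_distrr -big_split /=.
  by apply: leq_sum => c _; case: ltngtP => //=; lia.
have := sum_wt_code_le addC; lia.
Qed.

Lemma plane_with_four_rows m (W : 'M['F_2]_(m, 6)) : (9 <= m)%N ->
  exists A : 'M_(3, 6), \rank A = 3 /\ (3 < #|[set j | (row j W <= A)%MS]|)%N.
Proof.
move=> le9m; pose W9 : 'M_(9, 6) := rowsub (widen_ord le9m) W.
have := card_kernel_mul W9; rewrite card_Fp //; set C := [set _ | _] => card_C.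
have [c cC /andP [nz_c low_c]] : exists2 c, c \in C & (c != 0) && (wt c <= 4)%N.
  apply: low_weight_codeword_len9; last by rewrite -(@leq_pmul2r (2 ^ 6)).
    by rewrite inE mul0mx.
  by move=> a b; rewrite !inE mulmxDl => /eqP -> /eqP ->; rewrite addr0.
have cW0 : c *m W9 = 0 by apply/eqP; rewrite inE in cC.
have [A [rankA rowsA]] := exists_supmx_of_dep (k := 3) nz_c cW0 low_c isT isT.
exists A; split=> //; apply: leq_trans rowsA _.
have widen_inj : injective (widen_ord le9m) by move=> i j /(congr1 val) /= /val_inj.
rewrite -(card_imset _ widen_inj); apply: subset_leq_card.
by apply/subsetP => _ /imsetP [j + ->]; rewrite !inE row_rowsub.
Qed.

Definition u4 : 'rV['F_2]_6 := \row_(k < 6) ((k < 4)%N : nat)%:R.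
Definition v4 : 'rV['F_2]_6 := \row_(k < 6) ((2 <= k)%N : nat)%:R.
Definition arc8 : 'M['F_2]_(6 + (1 + 1), 6) := col_mx 1%:M (col_mx u4 v4).

Lemma arc8_dep_wt c : c != 0 -> c *m arc8 = 0 -> (5 <= wt c)%N.
Proof.
rewrite -[c]hsubmxK -[rsubmx c]hsubmxK /arc8 !mul_row_col mulmx1.
rewrite [lsubmx (rsubmx c)]mx11_scalar [rsubmx (rsubmx c)]mx11_scalar.
move: (lsubmx c) (lsubmx (rsubmx c) 0 0) (rsubmx (rsubmx c) 0 0) => u x y.
rewrite !mul_scalar_mx => nz_c /eqP; rewrite addr_eq0 oppmx_F2 => /eqP u_eq.
have wt_scalar (z : 'F_2) : wt (z%:M : 'M_1) = (z != 0) by rewrite wtE big_ord1 mxE.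
move: nz_c; rewrite u_eq !wt_row_mx !wt_scalar.
case: (F2_cases x) (F2_cases y) => -> [] ->; rewrite ?scale0r ?scale1r ?addr0 ?add0r.
  by rewrite raddf0 !row_mx_eq0 !eqxx.
all: by move=> _; rewrite wtE !big_ord_recr big_ord0 /= !mxE.
Qed.

Lemma arc8_nz_rows i : row i arc8 != 0.
Proof. by apply: nz_rows_of_dep_wt => c nz_c /(arc8_dep_wt nz_c); apply: leq_trans. Qed.

Lemma arc8_plane_rows (A : 'M_(3, 6)) : (#|[set j | (row j arc8 <= A)%MS]| <= 3)%N.
Proof.
rewrite leqNgt; apply/negP => /dep_of_supmx [c [nz_c cW0 low_c]].
by move: (arc8_dep_wt nz_c cW0); rewrite leqNgt ltnS low_c.
Qed.

Section BinaryProjectiveSpace.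
Variable N : nat.
Local Notation vec := 'rV['F_2]_N.+1.

Lemma span_row_F2 (v : vec) : [set u | (u <= v)%MS] = [set 0; v].
Proof.
apply/setP => u; rewrite !inE; apply/idP/idP => [/submxP [d ->] | /orP [] /eqP ->].
- rewrite [d]mx11_scalar mul_scalar_mx.
  by case: (F2_cases (d 0 0)) => ->; rewrite ?scale0r ?scale1r eqxx ?orbT.
- exact: sub0mx.
- exact: submx_refl.
Qed.

Lemma proj_pointP (P : {set vec}) :
  reflect (exists2 v, v != 0 & P = [set 0; v]) (proj_point P).
Proof.
apply: (iffP idP) => [/existsP [v /andP [rank_v /eqP ->]] | [v nz_v ->]].
  by exists v; [rewrite -mxrank_eq0 (eqP rank_v) | rewrite span_row_F2].
by apply/existsP; exists v; rewrite rank_rV nz_v span_row_F2 /=.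
Qed.

Lemma point_vec_inj (v w : vec) : v != 0 -> [set 0; v] = [set 0; w] -> v = w.
Proof.
move=> nz_v eq_vw; have : v \in [set 0; w] by rewrite -eq_vw !inE eqxx orbT.
by rewrite !inE (negbTE nz_v) => /eqP.
Qed.

Lemma mult_pointsE (K : multiset 'F_2 N) (S : {set vec}) : 0 \in S ->
  mult K S = (\sum_(v : vec | (v != 0%R) && (v \in S)) K [set 0%R; v])%N.
Proof.
move=> S0; pose vec_of (P : {set vec}) := odflt 0 [pick v in P | v != 0].
have vec_ofK v : v != 0 -> vec_of [set 0; v] = v.
  move=> nz_v; rewrite /vec_of; case: pickP => [w | /(_ v)] /=.
    by rewrite !inE => /andP [/orP [] /eqP -> //]; rewrite eqxx.
  by rewrite !inE eqxx orbT nz_v.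
rewrite /mult (reindex_onto (fun v => [set 0; v]) vec_of) => [|P]; last first.
  by case/andP => /proj_pointP [v nz_v ->] _; rewrite vec_ofK.
apply: eq_bigl => v; have [-> | nz_v] /= := eqVneq v 0.
  case: proj_pointP => // [[w nz_w /esym /(point_vec_inj nz_w) w0]].
  by move: nz_w; rewrite w0 eqxx.
rewrite vec_ofK // eqxx andbT; apply/andP/idP => [[_ /subsetP] | vS].
  by apply; rewrite !inE eqxx orbT.
split; first by apply/proj_pointP; exists v.
by apply/subsetP => u; rewrite !inE => /orP [] /eqP ->.
Qed.

Definition rows_multiset m (W : 'M['F_2]_(m, N.+1)) : multiset 'F_2 N :=
  fun P => #|[set i | P == [set 0; row i W]]|.

Section RowsMultiset.
Variables (m : nat) (W : 'M['F_2]_(m, N.+1)).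
Hypothesis nz_rows : forall i, row i W != 0.

Lemma rows_multiset_point (v : vec) : v != 0 ->
  rows_multiset W [set 0; v] = #|[set i | row i W == v]|.
Proof.
move=> nz_v; apply: eq_card => i; rewrite !inE eq_sym.
apply/eqP/eqP => [/(point_vec_inj (nz_rows i)) // | ->] //.
Qed.

Lemma mult_rows_multiset (S : {set vec}) : 0 \in S ->
  mult (rows_multiset W) S = #|[set i | row i W \in S]|.
Proof.
move=> S0; rewrite mult_pointsE // -sum1dep_card.
rewrite (partition_big (fun i => row i W) [pred v | (v != 0) && (v \in S)]) /=.
  apply: eq_bigr => v /andP [nz_v vS]; rewrite rows_multiset_point // -sum1dep_card.
  by apply: eq_bigl => i; case: eqP => [-> | _]; rewrite ?vS ?andbF.
by move=> i Si; rewrite nz_rows.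
Qed.

Lemma mult_rows_multiset_span k (A : 'M['F_2]_(k, N.+1)) :
  mult (rows_multiset W) [set v | (v <= A)%MS] = #|[set i | (row i W <= A)%MS]|.
Proof.
rewrite mult_rows_multiset ?inE ?sub0mx //.
by apply: eq_card => i; rewrite !inE.
Qed.

Lemma mcard_rows_multiset : mcard (rows_multiset W) = m.
Proof.
rewrite /mcard mult_rows_multiset ?inE //.
by rewrite -[RHS]card_ord -cardsT; apply: eq_card => i; rewrite !inE.
Qed.

End RowsMultiset.

Lemma multiset_as_rows (K : multiset 'F_2 N) :
  exists m (W : 'M['F_2]_(m, N.+1)),
    (forall i, row i W != 0) /\
    forall S : {set vec}, 0 \in S -> mult K S = mult (rows_multiset W) S.
Proof.
pose s := flatten [seq nseq (K [set 0; v]) v | v <- enum (predC1 (0 : vec))].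
have nz_s v : v \in s -> v != 0.
  by case/flatten_mapP => w; rewrite mem_enum => /= nz_w /nseqP [->].
pose W := \matrix_(j < size s) nth 0 s j.
have row_W j : row j W = nth 0 s j by apply/rowP => l; rewrite !mxE.
have nz_W j : row j W != 0 by rewrite row_W nz_s // mem_nth.
exists (size s), W; split=> // S S0; rewrite !mult_pointsE //.
apply: eq_bigr => v /andP [nz_v _]; rewrite rows_multiset_point //.
transitivity (count_mem v s).
  rewrite count_flatten sumnE !big_map big_enum /= (bigD1 v) //= count_nseq /= eqxx mul1n.
  by rewrite big1 ?addn0 // => w /andP [_ ne_wv]; rewrite count_nseq /= (negbTE ne_wv).
rewrite -sum1_count (big_nth 0) big_mkord sum1dep_card.
by apply: eq_card => j; rewrite !inE row_W.
Qed.

End BinaryProjectiveSpace.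

Theorem mainTheorem14 : @is_m 'F_2 5 2 3 8.
Proof.
split.
  exists (rows_multiset arc8); split; last exact: mcard_rows_multiset arc8_nz_rows.
  move=> S /existsP [A /andP [_ /eqP ->]].
  by rewrite (mult_rows_multiset_span arc8_nz_rows) arc8_plane_rows.
move=> K admK; have [m [W [nz_W multW]]] := multiset_as_rows K.
have -> : mcard K = m by rewrite -(mcard_rows_multiset nz_W) /mcard multW ?inE.
rewrite leqNgt; apply/negP => le9m.
have [A [rankA rowsA]] := plane_with_four_rows W le9m.
have S_plane : @proj_subspace 'F_2 5 2 [set v | (v <= A)%MS].
  by apply/existsP; exists A; rewrite rankA !eqxx.
have := admK _ S_plane; rewrite multW ?inE ?sub0mx // (mult_rows_multiset_span nz_W).
by rewrite leqNgt rowsA.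
Qed.
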